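(* Let $\ell$ be a prime and let $r$ be an integer with $1\leq r\leq \ell-1$ such that $p(\ell n+r)\equiv 0\pmod{\ell}$ for all $n\geq 0$. Then for all $n\geq 0$, $d_\ell(\ell n+r)\equiv 0 \pmod{\ell}$.
   Context: $p(n)$ denotes the number of unrestricted partitions of $n$. For each integer $k\geq 1$, the numbers $d_k(n)$ are defined by $\sum_{n\geq 0} d_k(n)q^n = \frac{f_2^k}{f_1^{3k+1}}$, where $f_r = \prod_{i\geq 1}(1-q^{ri})$. *)

From mathcomp Require Import all_boot all_order all_algebra.
Set Implicit Arguments. Unset Strict Implicit. Unset Printing Implicit Defensive.
Import Order.TTheory GRing.Theory Num.Theory.

(* A partition of n has at
   most n parts, each at most n; we represent it as a nonincreasing n-tuple
   of entries in {0..n} (padded with zeros) whose sum is n. *)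
Definition npart (n : nat) : nat :=
  #|[set t : n.-tuple 'I_n.+1 |
       sorted (fun a b : 'I_n.+1 => b <= a) t && (\sum_(x <- t) (x : nat) == n)]|.

Local Open Scope ring_scope.

(* d_k(n): coefficient of q^n in f_2^k / f_1^(3k+1), where
   f_r = prod_{i>=1} (1 - q^(r i)).  Modulo q^(n+1) only the factors with
   i <= n matter, and 1/(1-q^i) = sum_j q^(i j) may be truncated at j <= n;
   hence the coefficient is computed exactly by the following polynomial. *)
Definition dk (k n : nat) : int :=
  (\prod_(1 <= i < n.+1)
     ((1 - 'X^(2 * i)) ^+ k * (\sum_(j < n.+1) 'X^(i * j)) ^+ (3 * k + 1))
     : {poly int})`_n.

(* Modulo l, f_2^l / f_1^(3l+1) = (f_2 / f_1^3)^l * (1 / f_1), and over F_l an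
   l-th power is a series in q^l (Frobenius).  So the coefficient of q^(ln+r)
   is a sum of terms c_(lm) * p(l(n-m)+r), all divisible by l.  The truncated
   products defining d_l are matched with p through the bijection between
   partitions of j and their multiplicity functions 'I_N -> 'I_N.+1, which
   shows that the coefficient of q^j in prod_(i<=N) sum_(k<=N) q^(ik) is p(j). *)

From mathcomp Require Import all_boot all_order all_algebra.
From mathcomp Require Import zify.
Set Implicit Arguments. Unset Strict Implicit. Unset Printing Implicit Defensive.
Import GRing.Theory.

Local Open Scope ring_scope.

Section CountMultiplicities.
Local Open Scope nat_scope.
Variables (N : nat) (F : nat -> nat).

Lemma sum_mul_eq_succ x : x <= N ->
  \sum_(i < N) F i.+1 * (x == i.+1) = if x != 0 then F x else 0.
Proof.
case: x => [|x] x_le_N; first by rewrite big1 // => i _; rewrite muln0.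
rewrite (bigD1 (Ordinal x_le_N)) //= eqxx muln1 big1 ?addn0 // => i i_neq_x.
by rewrite eqSS eq_sym (negbTE (i_neq_x : (i : nat) != x)) muln0.
Qed.

Lemma sum_mul_count_mem (s : seq nat) : all (fun x => x <= N) s ->
  \sum_(i < N) F i.+1 * count_mem i.+1 s = \sum_(x <- s | x != 0) F x.
Proof.
elim: s => [|x s IHs] /=.
  by rewrite big_nil big1 // => i _; rewrite muln0.
case/andP=> x_le_N s_le_N; rewrite big_cons -IHs //.
have -> : \sum_(i < N) F i.+1 * count_mem i.+1 (x :: s) =
    \sum_(i < N) F i.+1 * (x == i.+1) + \sum_(i < N) F i.+1 * count_mem i.+1 s.
  by rewrite -big_split; apply: eq_bigr => i _; rewrite /= mulnDr.
by rewrite sum_mul_eq_succ //; case: (x != 0).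
Qed.

End CountMultiplicities.

Section PartitionMultiplicities.
Local Open Scope nat_scope.
Variables N j : nat.
Hypothesis j_le_N : j <= N.

Definition partition_tuples : {set j.-tuple 'I_j.+1} :=
  [set t : j.-tuple 'I_j.+1 |
    sorted (fun a b : 'I_j.+1 => b <= a) t && (\sum_(x <- t) (x : nat) == j)].

Definition mult_weight (f : {ffun 'I_N -> 'I_N.+1}) : nat :=
  \sum_(i < N) i.+1 * f i.

Definition multiplicities (t : j.-tuple 'I_j.+1) : {ffun 'I_N -> 'I_N.+1} :=
  [ffun i : 'I_N => inord (count_mem i.+1 (map (@nat_of_ord _) t))].

Lemma tuple_parts_le (t : j.-tuple 'I_j.+1) :
  all (fun x => x <= N) (map (@nat_of_ord _) t).
Proof.
by apply/allP => _ /mapP [x _ ->]; apply: leq_trans j_le_N; rewrite -ltnS.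
Qed.

Lemma multiplicitiesE t (i : 'I_N) :
  multiplicities t i = count_mem i.+1 (map (@nat_of_ord _) t) :> nat.
Proof.
rewrite ffunE inordK // ltnS (leq_trans (count_size _ _)) //.
by rewrite size_map size_tuple.
Qed.

Lemma mult_weight_multiplicities t :
  mult_weight (multiplicities t) = \sum_(x <- t) (x : nat).
Proof.
rewrite /mult_weight; under [LHS]eq_bigr => i _ do rewrite multiplicitiesE.
rewrite (sum_mul_count_mem id) ?tuple_parts_le // big_map big_mkcond.
by apply: eq_bigr => x _; case: (nat_of_ord x).
Qed.

Lemma count_nonzero_parts (t : j.-tuple 'I_j.+1) :
  count (predC (pred1 0)) (map (@nat_of_ord _) t)
  = \sum_(i < N) multiplicities t i.
Proof.
under eq_bigr => i _ do rewrite multiplicitiesE -[count_mem _ _]mul1n.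
by rewrite (sum_mul_count_mem (fun=> 1)) ?tuple_parts_le // sum1_count.
Qed.

Lemma multiplicities_inj : {in partition_tuples &, injective multiplicities}.
Proof.
move=> t1 t2; rewrite !inE => /andP[t1_sorted _] /andP[t2_sorted _] eq_mult.
have count_eq x : count_mem x (map (@nat_of_ord _) t1)
                = count_mem x (map (@nat_of_ord _) t2).
  case: x => [|x].
    have := count_predC (pred1 0) (map (@nat_of_ord _) t1).
    have := count_predC (pred1 0) (map (@nat_of_ord _) t2).
    by rewrite !count_nonzero_parts eq_mult !size_map !size_tuple; lia.
  have [x_lt_N | N_le_x] := ltnP x N.
    by rewrite -!(multiplicitiesE _ (Ordinal x_lt_N)) eq_mult.
  have count0 (t : j.-tuple 'I_j.+1) :
      count_mem x.+1 (map (@nat_of_ord _) t) = 0.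
    apply/count_memPn/negP => /(allP (tuple_parts_le t)) /=.
    by rewrite ltnNge N_le_x.
  by rewrite !count0.
have : map (@nat_of_ord _) t1 = map (@nat_of_ord _) t2.
  apply: (@sorted_eq _ (fun a b : nat => b <= a)); rewrite ?sorted_map //.
  - by move=> a b c b_le_a c_le_b; apply: leq_trans c_le_b b_le_a.
  - move=> a b /andP[b_le_a a_le_b].
    by apply/eqP; rewrite eqn_leq a_le_b b_le_a.
  - by apply/allP => x _; apply/eqP; exact: count_eq.
by move/(inj_map (@ord_inj _))/val_inj.
Qed.

Definition parts_of_mult (f : {ffun 'I_N -> 'I_N.+1}) : seq nat :=
  flatten [seq nseq (f i) i.+1 | i <- enum 'I_N].

Lemma count_parts_of_mult (a : pred nat) f :
  count a (parts_of_mult f) = \sum_(i < N) a i.+1 * f i.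
Proof.
rewrite count_flatten -map_comp sumnE big_map enumT.
by apply: eq_bigr => i _ /=; rewrite count_nseq.
Qed.

Lemma sumn_parts_of_mult f : sumn (parts_of_mult f) = mult_weight f.
Proof.
rewrite sumn_flatten -map_comp sumnE big_map enumT.
by apply: eq_bigr => i _ /=; rewrite sumn_nseq mulnC.
Qed.

Lemma multiplicities_surj f : mult_weight f = j ->
  exists2 t, t \in partition_tuples & multiplicities t = f.
Proof.
move=> weight_f; set s := parts_of_mult f.
have size_s : size s <= j.
  rewrite -count_predT count_parts_of_mult -weight_f.
  by apply: leq_sum => i _; rewrite mul1n leq_pmull.
have s_le_j : all (fun x => x <= j) s.
  apply/allP => x x_in_s; rewrite -weight_f -sumn_parts_of_mult.
  by rewrite (perm_sumn (perm_to_rem x_in_s)) leq_addr.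
set u := s ++ nseq (j - size s) 0.
have u_le_j : all (fun x => x <= j) u.
  by rewrite all_cat s_le_j all_nseq orbT.
have inordK_u : map (@nat_of_ord _) (map (inord : nat -> 'I_j.+1) u) = u.
  by rewrite -map_comp map_id_in // => x /(allP u_le_j) x_le_j; exact: inordK.
set ts := sort (fun a b : 'I_j.+1 => b <= a) (map inord u).
have size_ts : size ts == j.
  by rewrite size_sort size_map size_cat size_nseq subnKC.
have ts_perm : perm_eq (map (@nat_of_ord _) ts) u.
  by rewrite -[X in perm_eq _ X]inordK_u perm_map // perm_sort.
exists (Tuple size_ts).
  rewrite inE /= sort_sorted => [|a b]; last by rewrite orbC leq_total.
  rewrite -(big_map _ xpredT (fun x => x)) -sumnE (perm_sumn ts_perm).
  by rewrite sumn_cat sumn_nseq addn0 sumn_parts_of_mult weight_f eqxx.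
apply/ffunP => i; apply: val_inj; rewrite /= multiplicitiesE (permP ts_perm).
rewrite count_cat count_parts_of_mult count_nseq /= mul0n addn0.
rewrite (bigD1 i) //= eqxx mul1n big1 ?addn0 // => k k_neq_i.
by rewrite eqSS (negbTE (k_neq_i : (k : nat) != i)).
Qed.

Lemma card_mult_weight :
  #|[set f : {ffun 'I_N -> 'I_N.+1} | mult_weight f == j]| = npart j.
Proof.
rewrite [npart j]/(npart j) -/partition_tuples.
rewrite -(card_in_imset multiplicities_inj); apply: eq_card => f.
rewrite inE; apply/eqP/imsetP => [/multiplicities_surj [t t_part <-] | [t]].
  by exists t.
by rewrite inE => /andP[_ /eqP <-] ->; exact: mult_weight_multiplicities.
Qed.

End PartitionMultiplicities.

Lemma coef_partition_gf (R : nzSemiRingType) N j : (j <= N)%N ->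
  (\prod_(1 <= i < N.+1) \sum_(k < N.+1) 'X^(i * k) : {poly R})`_j = (npart j)%:R.
Proof.
move=> j_le_N; rewrite big_add1 /= big_mkord bigA_distr_bigA coef_sum.
(* the monomial selected by f : 'I_N -> 'I_N.+1 is 'X^(mult_weight f) *)
under eq_bigr do rewrite prodrXr coefXn.
rewrite -(card_mult_weight j_le_N) -sum1_card natr_sum [RHS]big_mkcond.
by apply: eq_bigr => f _; rewrite inE eq_sym; case: (_ == _).
Qed.

Lemma coef_exp_pchar_eq0 (R : comNzRingType) p (q : {poly R}) k :
  p \in [pchar R] -> ~~ (p %| k)%N -> (q ^+ p)`_k = 0.
Proof.
move=> pchar_p p_ndvd_k.
have pchar_poly_p : p \in [pchar {poly R}] by rewrite pchar_poly.
rewrite -(pFrobenius_autE pchar_poly_p) -(coefK q) poly_def rmorph_sum.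
rewrite coef_sum big1 // => i _.
rewrite -mul_polyC rmorphM /= !pFrobenius_autE -polyC_exp -exprM coefCM coefXn.
case: eqP => [k_eq | _]; last by rewrite mulr0.
by rewrite k_eq dvdn_mull in p_ndvd_k.
Qed.

Lemma coef_exp_pchar_mul_eq0 (R : comNzRingType) p (q s : {poly R}) n :
  p \in [pchar R] -> (forall k, (k <= n)%N -> k = n %[mod p] -> s`_k = 0) ->
  (q ^+ p * s)`_n = 0.
Proof.
move=> pchar_p s_eq0; rewrite coefM big1 // => -[k k_lt_n] _ /=.
have [/dvdnP[m k_eq] | p_ndvd_k] := boolP (p %| k)%N; last first.
  by rewrite coef_exp_pchar_eq0 ?mul0r.
rewrite s_eq0 ?mulr0 ?leq_subr // -[in RHS](subnK (k_lt_n : (k <= n)%N)).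
by rewrite addnC k_eq modnMDl.
Qed.

Theorem theorem3p2 (l r : nat) :
  prime l -> (1 <= r <= l - 1)%N ->
  (forall n : nat, (l %| npart (l * n + r))%N) ->
  forall n : nat, (l%:Z %| dk l (l * n + r))%Z.
Proof.
move=> l_prime /andP[_ r_le] l_dvd_npart n.
have r_lt_l : (r < l)%N by have := prime_gt0 l_prime; lia.
have pchar_l := pchar_Fp l_prime.
set N := (l * n + r)%N.
set S := fun i : nat => \sum_(k < N.+1) 'X^(i * k) : {poly int}.
have dk_factor :
    \prod_(1 <= i < N.+1) ((1 - 'X^(2 * i)) ^+ l * S i ^+ (3 * l + 1))
  = (\prod_(1 <= i < N.+1) ((1 - 'X^(2 * i)) * S i ^+ 3)) ^+ l
    * \prod_(1 <= i < N.+1) S i.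
  rewrite -prodrXl -big_split; apply: eq_bigr => i _.
  by rewrite exprMn -exprM mulnC addn1 exprSr mulrA.
rewrite (dvdz_pcharf pchar_l) /dk dk_factor -coef_map rmorphM rmorphXn /=.
apply/eqP/coef_exp_pchar_mul_eq0 => // k k_le_N k_eq_N.
rewrite coef_map coef_partition_gf //= rmorph_nat.
apply/eqP; rewrite -(dvdn_pcharf pchar_l).
have -> : k = (l * (k %/ l) + r)%N.
  rewrite {1}(divn_eq k l) k_eq_N /N [(l * n)%N]mulnC modnMDl.
  by rewrite modn_small // mulnC.
exact: l_dvd_npart.
Qed.
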